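(* The Borda SCC and the Copeland SCC are both immune to the reversal bias of type 3; that is, for $C\in\{Bor,Cop\}$ and every $p\in\mathcal P$, if $C(p)\cap C(p^r)\neq\varnothing$ then $C(p)=N$.
   Context: Let $n,h\ge2$, $N=\{1,\dots,n\}$, $H=\{1,\dots,h\}$. A preference profile is an $h$-tuple $p$ of linear orders on $N$; $\mathcal P$ is the set of profiles; $p^r$ is obtained by reversing each order; $\mathrm{rank}_{p_i}(x)=|\{y: y>_{p_i}x\}|+1$. Let $\mu_0=\lceil (h+1)/2\rceil$, and write $x>^p_{\mu_0}y$ if $|\{i\in H: x>_{p_i}y\}|\ge\mu_0$. The Borda SCC is $Bor(p)=\mathrm{argmax}_{x\in N}\sum_{i=1}^h(n-\mathrm{rank}_{p_i}(x))$; the Copeland SCC is $Cop(p)=\mathrm{argmax}_{x\in N}\big(|\{y: x>^p_{\mu_0}y\}|-|\{y: y>^p_{\mu_0}x\}|\big)$. An SCC $C$ suffers the reversal bias of type 3 if there exists $p$ with $|C(p)|<n$ and $C(p)\cap C(p^r)\ne\varnothing$. *)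

From mathcomp Require Import all_boot all_algebra.
Set Implicit Arguments. Unset Strict Implicit. Unset Printing Implicit Defensive.

(* Alternatives N = 'I_n, voters H = 'I_h.  A linear order on N is a strict
   total order, given as a boolean relation: [r x y] means "x is ranked above y". *)
Definition linear_order (n : nat) (r : rel 'I_n) : Prop :=
  [/\ irreflexive r, transitive r & forall x y, x != y -> r x y || r y x].

Definition profile (n h : nat) := 'I_h -> rel 'I_n.

Definition is_profile (n h : nat) (p : profile n h) : Prop :=
  forall i, linear_order (p i).

Definition rev_profile (n h : nat) (p : profile n h) : profile n h :=
  fun i x y => p i y x.

Definition rank (n : nat) (r : rel 'I_n) (x : 'I_n) : nat :=
  #|[set y | r y x]|.+1.

Definition borda_score (n h : nat) (p : profile n h) (x : 'I_n) : nat :=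
  \sum_(i < h) (n - rank (p i) x).

Definition Bor (n h : nat) (p : profile n h) : {set 'I_n} :=
  [set x | [forall y, borda_score p y <= borda_score p x]].

Definition mu0 (h : nat) : nat := uphalf h.+1.

Definition maj (n h : nat) (p : profile n h) (x y : 'I_n) : bool :=
  mu0 h <= #|[set i | p i x y]|.

Definition copeland_score (n h : nat) (p : profile n h) (x : 'I_n) : int :=
  (#|[set y | maj p x y]|%:Z - #|[set y | maj p y x]|%:Z)%R.

Definition Cop (n h : nat) (p : profile n h) : {set 'I_n} :=
  [set x | [forall y, (copeland_score p y <= copeland_score p x)%R]].

(** Reversing a profile turns each voting score into a constant minus itself:
    the Borda scores of [x] in [p] and [p^r] add up to [h (n - 1)], and the
    Copeland score of [x] in [p^r] is the opposite of its score in [p].  Hence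
    the winners of [p^r] are exactly the losers of [p], and an alternative that
    both maximizes and minimizes the score forces the score to be constant, so
    that every alternative wins. *)

From mathcomp Require Import all_boot all_algebra.
From mathcomp Require Import all_order zify.
Set Implicit Arguments.
Unset Strict Implicit.
Unset Printing Implicit Defensive.

Import Order.TTheory GRing.Theory Num.Theory.

Lemma argmax_setT (d : Order.disp_t) (T : porderType d) (I : finType)
    (f : I -> T) (x : I) :
  (forall y, (f y <= f x)%O) -> (forall y, (f x <= f y)%O) ->
  [set z | [forall y, (f y <= f z)%O]] = [set: I].
Proof.
move=> fx_max fx_min.
have f_const y : f y = f x by apply: le_anti; rewrite fx_max fx_min.
by apply/setP=> z; rewrite !inE; apply/forallP=> y; rewrite !f_const.
Qed.

Lemma rank_add_rev (n : nat) (r : rel 'I_n) (x : 'I_n) : linear_order r ->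
  rank r x + rank (fun a b => r b a) x = n.+1.
Proof.
move=> [r_irr r_tr r_tot]; rewrite /rank addSn addnS -cardsUI.
have -> : [set y | r y x] :&: [set y | r x y] = set0.
  apply/setP=> y; rewrite !inE; apply/negbTE/andP=> [[ryx rxy]].
  by have := r_tr _ _ _ rxy ryx; rewrite r_irr.
have -> : [set y | r y x] :|: [set y | r x y] = [set~ x].
  apply/setP=> y; rewrite !inE.
  have [->|y_neq_x] := eqVneq y x; first by rewrite r_irr.
  by rewrite orbC r_tot // eq_sym.
by rewrite cards0 addn0 cardsC1 card_ord prednK // (leq_ltn_trans _ (ltn_ord x)).
Qed.

Lemma borda_score_add_rev (n h : nat) (p : profile n h) (x : 'I_n) :
  is_profile p -> borda_score p x + borda_score (rev_profile p) x = h * n.-1.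
Proof.
move=> p_lo; rewrite /borda_score -big_split /=.
rewrite (eq_bigr (fun _ => n.-1)) ?sum_nat_const ?card_ord // => i _.
have := rank_add_rev x (p_lo i); rewrite /rank /rev_profile; lia.
Qed.

Lemma copeland_score_rev (n h : nat) (p : profile n h) (x : 'I_n) :
  copeland_score (rev_profile p) x = (- copeland_score p x)%R.
Proof. by rewrite /copeland_score /maj /rev_profile opprB. Qed.

Lemma in_Bor_rev (n h : nat) (p : profile n h) (x : 'I_n) : is_profile p ->
  (x \in Bor (rev_profile p)) = [forall y, borda_score p x <= borda_score p y].
Proof.
move=> p_lo; rewrite inE; apply: eq_forallb=> y.
rewrite -(leq_add2l (borda_score p y)) borda_score_add_rev //.
by rewrite -(borda_score_add_rev x p_lo) leq_add2r.
Qed.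

Lemma in_Cop_rev (n h : nat) (p : profile n h) (x : 'I_n) :
  (x \in Cop (rev_profile p)) =
  [forall y, (copeland_score p x <= copeland_score p y)%R].
Proof. by rewrite inE; apply: eq_forallb=> y; rewrite 2!copeland_score_rev lerN2. Qed.

Theorem proposition2 (n h : nat) (hn : 2 <= n) (hh : 2 <= h) :
  (forall p : profile n h, is_profile p ->
     Bor p :&: Bor (rev_profile p) != set0 -> Bor p = [set: 'I_n]) /\
  (forall p : profile n h, is_profile p ->
     Cop p :&: Cop (rev_profile p) != set0 -> Cop p = [set: 'I_n]).
Proof.
split=> p p_lo /set0Pn [x]; rewrite inE => /andP [x_max x_min].
- rewrite in_Bor_rev // in x_min; rewrite inE in x_max.
  exact: (argmax_setT (T := nat) (forallP x_max) (forallP x_min)).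
- rewrite in_Cop_rev in x_min; rewrite inE in x_max.
  exact: (argmax_setT (forallP x_max) (forallP x_min)).
Qed.
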